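(* Let $m,n,k\in\mathbb{N}$ and $\delta\le 0$. Then \[ \sum_{i=0}^{n}(-1)^{i}\binom{n}{i}\frac{(k)_i}{(m+n)_i}\,\frac{\prod_{j=k-1}^{k+i-2}(1-j\delta)}{\prod_{j=m}^{m+i-1}(1-j\delta)} =\frac{(m+n-k)_n\prod_{j=m+k}^{m+n+k-1}(1-j\delta)}{(m+n)_n\prod_{j=m}^{m+n-1}(1-j\delta)}. \]
   Context: For $x\in\mathbb{R}$ and $k\in\mathbb{N}$, $(x)_k=x(x-1)\cdots(x-k+1)$ with $(x)_0=1$. Empty products equal $1$. *)

From HB Require Import structures.
From mathcomp Require Import all_boot all_order all_algebra.
Set Implicit Arguments. Unset Strict Implicit. Unset Printing Implicit Defensive.
Import Order.TTheory GRing.Theory Num.Theory.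
Local Open Scope ring_scope.

Definition falling {R : nzRingType} (x : R) (k : nat) : R :=
  \prod_(t < k) (x - t%:R).

Definition iprod {R : nzRingType} (a b : int) (F : int -> R) : R :=
  if (b < a)%R then 1 else \prod_(t < absz (b - a + 1)%R) F (a + t%:Z)%R.

From HB Require Import structures.
From mathcomp Require Import all_boot all_order all_algebra.
From mathcomp Require Import ring lra zify.
Set Implicit Arguments.
Unset Strict Implicit.
Unset Printing Implicit Defensive.
Import Order.TTheory GRing.Theory Num.Theory.
Local Open Scope ring_scope.

(* Writing [1 - j delta = -delta (j - 1/delta)], the sum is a balanced
   terminating 3F2 at 1, i.e. an instance of the Pfaff-Saalschuetz identity.
   We prove it by creative telescoping in [n]: with [N = m + n], the sums
   [S n] satisfy the first-order recurrence
     (N + 1) (1 - N delta) S (n+1) = (N + 1 - k) (1 - (N + k) delta) S n,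
   because the corresponding combination of the summands is the difference
   [G (i+1) - G i] of an explicit (Zeilberger) certificate [G = saal_cert n];
   the closed form satisfies the same recurrence and agrees with [S 0 = 1].  The hypothesis
   [delta <= 0] only serves to make all factors [1 - j delta] (j >= 0) of
   the denominators nonzero. *)

Lemma iprod_prod (R : nzRingType) (a : int) (i : nat) (F : int -> R) :
  iprod a (a + i%:Z - 1) F = \prod_(t < i) F (a + t%:Z).
Proof.
rewrite /iprod; case: i => [|j].
  by rewrite big_ord0 ifT // addr0 ltrBlDr ltrDl.
rewrite ifF; last by apply/negbTE; rewrite -leNgt -addrA lerDl -addn1 PoszD addrK.
by have -> : a + j.+1%:Z - 1 - a + 1 = j.+1%:Z by rewrite -addn1 PoszD; ring.
Qed.

Lemma fallingSr (R : nzRingType) (x : R) j :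
  falling x j.+1 = falling x j * (x - j%:R).
Proof. by rewrite /falling big_ord_recr. Qed.

Lemma falling_add1S (R : comNzRingType) (x : R) j :
  falling (x + 1) j.+1 = (x + 1) * falling x j.
Proof.
rewrite /falling big_ord_recl subr0; congr (_ * _); apply: eq_bigr => t _.
by rewrite /= /bump add1n -addn1 natrD; ring.
Qed.

Lemma falling_nat_gt0 (R : numDomainType) (N j : nat) :
  (j <= N)%N -> 0 < falling (N%:R : R) j.
Proof.
move=> le_jN; apply: prodr_gt0 => t _; rewrite subr_gt0 ltr_nat.
exact: leq_trans (ltn_ord t) le_jN.
Qed.

Section DeltaProducts.
Variables (R : realFieldType) (delta : R).

Definition dfac (x : R) : R := 1 - x * delta.

Definition dprod (a : R) (i : nat) : R := \prod_(t < i) dfac (a + t%:R).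

Lemma dprodS a i : dprod a i.+1 = dprod a i * dfac (a + i%:R).
Proof. by rewrite /dprod big_ord_recr. Qed.

Lemma iprod_dprod (a : int) (i : nat) :
  iprod a (a + i%:Z - 1) (fun j => 1 - j%:~R * delta) = dprod a%:~R i.
Proof. by rewrite iprod_prod; apply: eq_bigr => t _; rewrite /dfac intrD. Qed.

Hypothesis delta_le0 : delta <= 0.

Lemma dfac_gt0 x : 0 <= x -> 0 < dfac x.
Proof. by move=> x_ge0; have := mulr_ge0_le0 x_ge0 delta_le0; rewrite /dfac; lra. Qed.

Lemma dprod_gt0 a i : 0 <= a -> 0 < dprod a i.
Proof.
move=> a_ge0; apply: prodr_gt0 => t _; apply: dfac_gt0.
by rewrite addr_ge0 ?ler0n.
Qed.

End DeltaProducts.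

Section Saalschuetz.
Variables (R : realFieldType) (delta : R) (m k : nat).
Hypothesis delta_le0 : delta <= 0.

Local Notation N n := ((m + n)%:R : R).

Definition saal_term (n i : nat) : R :=
  (-1) ^+ i * ('C(n, i))%:R * (falling (k%:R : R) i / falling (N n) i)
    * (dprod delta (k%:R - 1) i / dprod delta m%:R i).

Definition saal_sum (n : nat) : R := \sum_(0 <= i < n.+1) saal_term n i.

Definition saal_cert (n i : nat) : R :=
  if i is j.+1 then
    (-1) ^+ j * ('C(n, j))%:R * falling (k%:R : R) j.+1 * dprod delta (k%:R - 1) j.+1
      / (falling (N n) j * dprod delta m%:R j)
  else 0.

Lemma saal_term_telescope n i : (i <= n)%N ->
  (N n + 1) * dfac delta (N n) * saal_term n.+1 i
    - (N n + 1 - k%:R) * dfac delta (N n + k%:R) * saal_term n i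
  = saal_cert n i.+1 - saal_cert n i.
Proof.
case: i => [_|j lt_jn].
  rewrite /saal_term /saal_cert /dprod /falling !big_ord_recr !big_ord0 /= !bin0.
  by rewrite /dfac !natrD !expr0; field.
have fN_neq0 : falling (N n) j != 0.
  by rewrite lt0r_neq0 // falling_nat_gt0 //; lia.
have dm_neq0 : dprod delta m%:R j != 0 by rewrite lt0r_neq0 // dprod_gt0.
have dmj_neq0 : dfac delta (m%:R + j%:R) != 0.
  by rewrite lt0r_neq0 // dfac_gt0 // -natrD.
have nj_neq0 : (n%:R - j%:R : R) != 0.
  by rewrite -natrB 1?ltnW // pnatr_eq0 subn_eq0 -ltnNge.
have mnj_neq0 : ((m + n)%:R - j%:R : R) != 0.
  by rewrite -natrB ?pnatr_eq0 ?subn_eq0 -?ltnNge; lia.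
have N1_neq0 : N n + 1 != 0 by rewrite natr1 pnatr_eq0.
have binE : ('C(n, j))%:R = (j%:R + 1) * ('C(n, j.+1))%:R / (n%:R - j%:R) :> R.
  apply: (canRL (mulfK nj_neq0)).
  by rewrite -natrB 1?ltnW // -natrM mulnC -mul_bin_left natrM -natr1.
rewrite /saal_term /saal_cert addnS binS -natr1 falling_add1S.
rewrite !fallingSr !dprodS !exprS -natr1 !natrD !binE.
rewrite !natrD in fN_neq0 mnj_neq0 N1_neq0 *; rewrite /dfac in dmj_neq0 *.
by field; rewrite fN_neq0 dm_neq0 dmj_neq0 nj_neq0 mnj_neq0 N1_neq0.
Qed.

Lemma saal_term_last n :
  (N n + 1) * dfac delta (N n) * saal_term n.+1 n.+1 = - saal_cert n n.+1.
Proof.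
have fN_neq0 : falling (N n) n != 0.
  by rewrite lt0r_neq0 // falling_nat_gt0 // leq_addl.
have dm_neq0 : dprod delta m%:R n != 0 by rewrite lt0r_neq0 // dprod_gt0.
have dmn_neq0 : dfac delta (m%:R + n%:R) != 0.
  by rewrite lt0r_neq0 // dfac_gt0 // -natrD.
have N1_neq0 : N n + 1 != 0 by rewrite natr1 pnatr_eq0.
rewrite /saal_term /saal_cert !binn addnS -[(m + n).+1%:R]natr1 falling_add1S.
rewrite !dprodS exprS.
rewrite !natrD in fN_neq0 N1_neq0 *; rewrite /dfac in dmn_neq0 *.
by field; rewrite fN_neq0 dm_neq0 dmn_neq0 N1_neq0.
Qed.

Lemma saal_sum_rec n :
  (N n + 1) * dfac delta (N n) * saal_sum n.+1
  = (N n + 1 - k%:R) * dfac delta (N n + k%:R) * saal_sum n.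
Proof.
have telescoped : \sum_(0 <= i < n.+1)
    ((N n + 1) * dfac delta (N n) * saal_term n.+1 i
     - (N n + 1 - k%:R) * dfac delta (N n + k%:R) * saal_term n i)
  = saal_cert n n.+1.
  rewrite (telescope_sumr_eq (saal_cert n)) ?subr0 // => i /andP[_ lt_in].
  exact: saal_term_telescope.
rewrite sumrB -!mulr_sumr -/(saal_sum n) in telescoped.
rewrite [saal_sum n.+1]/saal_sum big_nat_recr //= mulrDr saal_term_last.
by rewrite -telescoped; ring.
Qed.

Lemma saal_sum_closed n :
  saal_sum n = falling (N n - k%:R) n * dprod delta (m%:R + k%:R) n
               / (falling (N n) n * dprod delta m%:R n).
Proof.
elim: n => [|n IH].
  rewrite /saal_sum big_nat1 /saal_term /dprod /falling !big_ord0 bin0 expr0.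
  by rewrite !(mul1r, mulr1, invr1, divr1).
have fN_neq0 : falling (N n) n != 0.
  by rewrite lt0r_neq0 // falling_nat_gt0 // leq_addl.
have dm_neq0 : dprod delta m%:R n != 0 by rewrite lt0r_neq0 // dprod_gt0.
have dmn_neq0 : dfac delta (N n) != 0 by rewrite lt0r_neq0 // dfac_gt0.
have N1_neq0 : N n + 1 != 0 by rewrite natr1 pnatr_eq0.
have -> : saal_sum n.+1 = (N n + 1 - k%:R) * dfac delta (N n + k%:R) * saal_sum n
                          / ((N n + 1) * dfac delta (N n)).
  by rewrite -saal_sum_rec mulrC mulKf // mulf_neq0.
have -> : N n.+1 = N n + 1 by rewrite addnS natr1.
have -> : N n + 1 - k%:R = (N n - k%:R) + 1 by ring.
rewrite IH !falling_add1S !dprodS.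
rewrite !natrD in fN_neq0 dmn_neq0 N1_neq0 *; rewrite /dfac in dmn_neq0 *.
by field; rewrite fN_neq0 dm_neq0 dmn_neq0 N1_neq0.
Qed.

End Saalschuetz.

Theorem lemmaC1 (R : realFieldType) (m n k : nat) (delta : R) (hdelta : delta <= 0) :
  \sum_(0 <= i < n.+1)
     (-1) ^+ i * ('C(n, i))%:R
       * (falling (k%:R : R) i / falling ((m + n)%:R : R) i)
       * (iprod (k%:Z - 1) (k%:Z + i%:Z - 2) (fun j => 1 - j%:~R * delta)
          / iprod m%:Z (m%:Z + i%:Z - 1) (fun j => 1 - j%:~R * delta))
  = falling ((m + n)%:R - k%:R : R) n
       * iprod (m%:Z + k%:Z) (m%:Z + n%:Z + k%:Z - 1) (fun j => 1 - j%:~R * delta)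
    / (falling ((m + n)%:R : R) n
       * iprod m%:Z (m%:Z + n%:Z - 1) (fun j => 1 - j%:~R * delta)).
Proof.
have int_shift (i : nat) : k%:Z + i%:Z - 2 = (k%:Z - 1) + i%:Z - 1 by ring.
under eq_bigr => i _ do rewrite int_shift !iprod_dprod.
have -> : m%:Z + n%:Z + k%:Z - 1 = (m%:Z + k%:Z) + n%:Z - 1 by ring.
by rewrite !iprod_dprod intrB intrD -(saal_sum_closed m k hdelta).
Qed.
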